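(* Let $(R,\mathcal{T})$ and $(S,\widetilde{\mathcal{T}})$ be transverse étale equivalence relations on a compact, metrizable, zero-dimensional space $X$. Transfer the topology of $R\times_XS$ to $R\vee S$ via the bijection $r\times s:R\times_XS\to R\vee S$, $((x,y),(y,z))\mapsto(x,z)$, and call the resulting topology $\mathcal{W}$. Then $(R\vee S,\mathcal{W})$ is an étale equivalence relation on $X$; if $R$ and $S$ are CEERs, then $(R\vee S,\mathcal{W})$ is a CEER. Moreover, $\mathcal{W}$ is the unique étale topology on $R\vee S$ whose relative topologies on $R$ and $S$ are $\mathcal{T}$ and $\widetilde{\mathcal{T}}$ respectively, and $R$ and $S$ are both open subsets of $(R\vee S,\mathcal{W})$.
   Context: An étale equivalence relation on $X$ is a countable equivalence relation $R\subset X\times X$ with a locally compact, Hausdorff, second countable topology in which the product $(x,y)\cdot(y,z)=(x,z)$ of composable pairs is continuous (relative topology from $R\times R$), the inverse $(x,y)\mapsto(y,x)$ is a homeomorphism, and the range map $r(x,y)=x$ is a local homeomorphism $R\to X$. A CEER is a compact étale equivalence relation. $R\vee S$ is the equivalence relation generated by $R$ and $S$. $R\times_XS=\{((x,y),(y,z)):(x,y)\in R,(y,z)\in S\}$ with the relative topology from $R\times S$, with $r((x,y),(y,z))=x$, $s((x,y),(y,z))=z$. $R$ and $S$ are transverse if $R\cap S=\Delta_X$ and there is a homeomorphism $h:R\times_XS\to S\times_XR$ with $r\circ h=r$, $s\circ h=s$; for transverse $R,S$ the map $r\times s:R\times_XS\to R\vee S$ is a bijection. *)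

From mathcomp Require Import all_boot all_algebra.
From mathcomp Require Import all_classical all_reals all_analysis.
From mathcomp Require Import Rstruct Rstruct_topology.
Set Implicit Arguments. Unset Strict Implicit. Unset Printing Implicit Defensive.
Import Num.Theory.
Local Open Scope classical_set_scope.
Local Open Scope ring_scope.

Definition metrizable (X : topologicalType) : Prop :=
  exists d : X -> X -> Rdefinitions.R,
    [/\ (forall x y, d x y = 0 <-> x = y),
        (forall x y, d x y = d y x),
        (forall x y z, d x z <= d x y + d y z) &
        (forall U : set X,
            open U <-> (forall x, U x -> exists2 e : Rdefinitions.R, 0 < e &
                                  [set y | d x y < e] `<=` U))].

Definition zero_dim (X : topologicalType) : Prop :=
  forall (U : set X) (x : X), open U -> U x ->
    exists V : set X, [/\ clopen V, V x & V `<=` U].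

(* A small set-based general topology: a topology on a subset A of a   *)
(* type T is given by its family O of open sets (all contained in A).  *)
(* This lets us consider several topologies on the same set.           *)
Section GenTop.
Context {T : Type}.

Definition is_topology (A : set T) (O : set (set T)) : Prop :=
  [/\ (forall U, O U -> U `<=` A), O set0, O A,
      (forall F : set (set T), F `<=` O -> O (\bigcup_(U in F) U)) &
      (forall U V, O U -> O V -> O (U `&` V))].

Definition subspace_top (O : set (set T)) (B : set T) : set (set T) :=
  [set U | exists2 V, O V & U = V `&` B].

Definition hausdorff_on (A : set T) (O : set (set T)) : Prop :=
  forall x y, A x -> A y -> x <> y ->
    exists U V, [/\ O U, O V, U x, V y & U `&` V = set0].

Definition compact_in (A : set T) (O : set (set T)) (K : set T) : Prop :=
  K `<=` A /\
  forall F : set (set T), F `<=` O -> K `<=` \bigcup_(U in F) U ->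
    exists2 G : set (set T), finite_set G /\ G `<=` F & K `<=` \bigcup_(U in G) U.

Definition locally_compact_on (A : set T) (O : set (set T)) : Prop :=
  forall x, A x -> exists U K, [/\ O U, U x, U `<=` K & compact_in A O K].

Definition second_countable_on (O : set (set T)) : Prop :=
  exists B : set (set T), [/\ countable B, B `<=` O &
    forall U x, O U -> U x -> exists2 V, B V & V x /\ V `<=` U].

End GenTop.

Section Cont.
Context {T1 T2 : Type}.
Definition continuous_on (A : set T1) (OA : set (set T1))
    (B : set T2) (OB : set (set T2)) (f : T1 -> T2) : Prop :=
  (forall x, A x -> B (f x)) /\
  (forall V, OB V -> OA (A `&` f @^-1` V)).

End Cont.

Section Maps.
Context {T1 T2 : Type}.

Definition prod_top (O1 : set (set T1)) (O2 : set (set T2)) : set (set (T1 * T2)) :=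
  [set W | forall p, W p -> exists U V,
      [/\ O1 U, O2 V, U p.1, V p.2 & [set q | U q.1 /\ V q.2] `<=` W]].

Definition homeo_on (A : set T1) (OA : set (set T1))
    (B : set T2) (OB : set (set T2)) (f : T1 -> T2) : Prop :=
  continuous_on A OA B OB f /\
  exists g : T2 -> T1, [/\ continuous_on B OB A OA g,
      (forall x, A x -> g (f x) = x) & (forall y, B y -> f (g y) = y)].

Definition local_homeo_on (A : set T1) (OA : set (set T1))
    (B : set T2) (OB : set (set T2)) (f : T1 -> T2) : Prop :=
  (forall x, A x -> B (f x)) /\
  forall x, A x -> exists U, [/\ OA U, U x, OB (f @` U) &
      homeo_on U (subspace_top OA U) (f @` U) (subspace_top OB (f @` U)) f].

End Maps.

Section Etale.
Context {X : topologicalType}.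

Definition equivalence_rel (R : set (X * X)) : Prop :=
  [/\ (forall x, R (x, x)), (forall x y, R (x, y) -> R (y, x)) &
      (forall x y z, R (x, y) -> R (y, z) -> R (x, z))].

Definition join_rel (R S : set (X * X)) : set (X * X) :=
  [set p | forall E, equivalence_rel E -> R `<=` E -> S `<=` E -> E p].

Definition fibprod (R S : set (X * X)) : set ((X * X) * (X * X)) :=
  [set pq | [/\ R pq.1, S pq.2 & pq.1.2 = pq.2.1]].

Definition fibprod_top (R : set (X * X)) (OR : set (set (X * X)))
    (S : set (X * X)) (OS : set (set (X * X))) : set (set ((X * X) * (X * X))) :=
  subspace_top (prod_top OR OS) (fibprod R S).

Definition rng2 (pq : (X * X) * (X * X)) : X := pq.1.1.
Definition src2 (pq : (X * X) * (X * X)) : X := pq.2.2.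
Definition rs_map (pq : (X * X) * (X * X)) : X * X := (pq.1.1, pq.2.2).

Definition open_X : set (set X) := [set U | open U].

Definition etale_eq_rel (R : set (X * X)) (OR : set (set (X * X))) : Prop :=
  [/\ equivalence_rel R /\ (forall x, countable [set y | R (x, y)]),
      is_topology R OR /\
      [/\ hausdorff_on R OR, locally_compact_on R OR & second_countable_on OR],
      continuous_on (fibprod R R) (fibprod_top R OR R OR) R OR rs_map,
      homeo_on R OR R OR (fun p => (p.2, p.1)) &
      local_homeo_on R OR setT open_X fst].

Definition CEER (R : set (X * X)) (OR : set (set (X * X))) : Prop :=
  etale_eq_rel R OR /\ compact_in R OR R.

Definition transverse (R : set (X * X)) (OR : set (set (X * X)))
    (S : set (X * X)) (OS : set (set (X * X))) : Prop :=
  R `&` S = [set p | p.1 = p.2] /\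
  exists h : (X * X) * (X * X) -> (X * X) * (X * X),
    [/\ homeo_on (fibprod R S) (fibprod_top R OR S OS)
                 (fibprod S R) (fibprod_top S OS R OR) h,
        (forall pq, fibprod R S pq -> rng2 (h pq) = rng2 pq) &
        (forall pq, fibprod R S pq -> src2 (h pq) = src2 pq)].

Definition join_top (R : set (X * X)) (OR : set (set (X * X)))
    (S : set (X * X)) (OS : set (set (X * X))) : set (set (X * X)) :=
  [set V | exists2 U, fibprod_top R OR S OS U & V = rs_map @` U].

End Etale.

(* Transversality makes r x s : R x_X S -> R \/ S injective: if two composable
   pairs (x,y),(y,z) and (x,y'),(y',z) have the same ends, then (y,y') lies in
   both R and S, hence on the diagonal.  So R \/ S inherits from R x_X S a
   topology W making r x s a homeomorphism, and every étale property of
   (R \/ S, W) is checked on R x_X S.  The crucial one, continuity of the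
   product, rests on the inverse of the transversality homeomorphism: it
   rewrites the middle factor (y,z),(z,w) of a composable quadruple in
   R x_X S x_X R x_X S as an element of R x_X S, after which the product is
   computed with the products of R and of S.  The range map of W is open and
   locally injective because those of R and S are; local compactness then
   comes from clopen neighbourhoods in the compact zero-dimensional X.  Compactness of
   R x_X S comes from the tube lemma, R x_X S being closed in R x S when X
   is Hausdorff.  R and S embed in R x_X S as R x_X Δ and Δ x_X S, where the
   diagonal Δ is open in any étale relation; this gives the relative
   topologies and the openness of R and S.  Finally an étale topology O on
   R \/ S inducing OR and OS makes the product (R,OR) x_X (S,OS) -> (R \/ S, O)
   continuous, so O is coarser than W, and conversely a W-open set is a union
   of bisections of O because the range maps of both topologies are open and
   locally injective. *)
From HB Require Import structures.
From Pilot Require Import Defs.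
From mathcomp Require Import all_boot all_algebra.
From mathcomp Require Import all_classical all_reals all_analysis.
From mathcomp Require Import finmap.
Set Implicit Arguments. Unset Strict Implicit. Unset Printing Implicit Defensive.
Local Open Scope classical_set_scope.

Definition hilbert {T : Type} (P : T -> Prop) (d : T) : T :=
  match pselect (exists x, P x) with
  | left e => projT1 (cid e)
  | right _ => d end.

Lemma hilbertP T (P : T -> Prop) d : (exists x, P x) -> P (hilbert P d).
Proof. rewrite /hilbert; case: pselect => [e _|n e]; [exact: projT2 (cid e)|by case: n]. Qed.

Section CoverCompact.
Variables (X : topologicalType) (x0 : X).

(* [cover_compact] needs a pointed type; [x0] makes a pointed copy of [X]. *)
Definition pointed_at : Type := X.
HB.instance Definition _ := Topological.on pointed_at.
HB.instance Definition _ := isPointed.Build pointed_at x0.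

Lemma compact_cover_compact (A : set X) : compact A -> @cover_compact pointed_at A.
Proof. by move=> cA; rewrite -compact_cover. Qed.

End CoverCompact.

Section Topology.
Context {T : Type}.
Implicit Types (A B U V : set T) (O : set (set T)).

Lemma open_sub A O U : is_topology A O -> O U -> U `<=` A.
Proof. by case=> + _ _ _ _; apply. Qed.

Lemma open_full A O : is_topology A O -> O A.
Proof. by case. Qed.

Lemma open_set0 A O : is_topology A O -> O set0.
Proof. by case. Qed.

Lemma openI_on A O U V : is_topology A O -> O U -> O V -> O (U `&` V).
Proof. by case=> _ _ _ _; apply. Qed.

Lemma open_bigcup A O (F : set (set T)) :
  is_topology A O -> F `<=` O -> O (\bigcup_(U in F) U).
Proof. by case=> _ _ _ + _; apply. Qed.

Lemma open_locally A O U : is_topology A O ->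
  (forall x, U x -> exists2 V, O V & V x /\ V `<=` U) -> O U.
Proof.
move=> tO H.
have -> : U = \bigcup_(V in [set V | O V /\ V `<=` U]) V.
  apply/seteqP; split=> [x Ux|x [V [_ VU] Vx]]; last exact: VU.
  by have [V OV [Vx VU]] := H x Ux; exists V.
by apply: open_bigcup tO _ => V [].
Qed.

Lemma open_finite_bigcap A O (H : set (set T)) :
  is_topology A O -> finite_set H -> H `<=` O -> O (A `&` \bigcap_(U in H) U).
Proof.
move=> tO /finite_fsetP [s ->].
rewrite (_ : [set` s] = [set U | U \in enum_fset s]) //.
elim: (enum_fset s) => [|U l IH] Hl.
  suff -> : A `&` \bigcap_(U in [set U | U \in [::]]) U = A by exact: open_full tO.
  by apply/seteqP; split=> x; [case|move=> Ax; split=> // U].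
have OU : O U by apply: Hl => /=; rewrite in_cons eqxx.
have Ol : O (A `&` \bigcap_(V in [set V | V \in l]) V).
  by apply: IH => V Vl; apply: Hl => /=; rewrite in_cons Vl orbT.
suff -> : A `&` \bigcap_(V in [set V | V \in U :: l]) V =
          (A `&` \bigcap_(V in [set V | V \in l]) V) `&` U by exact: openI_on tO Ol OU.
apply/seteqP; split=> x.
- move=> [Ax HH]; split; [split=> // V Vl|]; apply: HH => /=; rewrite in_cons ?Vl ?orbT ?eqxx //.
- move=> [[Ax HH] Ux]; split=> // V /=; rewrite in_cons => /orP [/eqP ->//|Vl]; exact: HH.
Qed.

Lemma is_topology_subspace A O B :
  is_topology A O -> B `<=` A -> is_topology B (subspace_top O B).
Proof.
move=> tO BA; split.
- by move=> U [V _ ->] x [].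
- by exists set0; [exact: open_set0 tO|rewrite set0I].
- exists A; [exact: open_full tO|]; apply/seteqP; split=> x; [move=> Bx; split=> //; exact: BA|by case].
- move=> F FO; exists (\bigcup_(V in [set V | O V /\ F (V `&` B)]) V).
    by apply: open_bigcup tO _ => V [].
  apply/seteqP; split=> x.
  + move=> [U FU Ux]; have [V OV eU] := FO U FU.
    by move: (Ux); rewrite eU => -[Vx Bx]; split=> //; exists V => //; split=> //; rewrite -eU.
  + by move=> [[V [_ FV] Vx] Bx]; exists (V `&` B).
- move=> _ _ [U OU ->] [V OV ->]; exists (U `&` V); first exact: openI_on tO OU OV.
  by rewrite setIACA setIid.
Qed.

End Topology.

Lemma is_topology_open_X (X : topologicalType) : is_topology [set: X] open_X.
Proof.
split=> //; [exact: open0|exact: openT| |].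
- by move=> F FO; apply: bigcup_open.
- by move=> U V oU oV; exact: openI.
Qed.

Section Continuity.
Context {T1 T2 : Type}.
Implicit Types (A U : set T1) (B V : set T2) (OA : set (set T1)) (OB : set (set T2)).

Lemma continuous_on_mapsto A OA B OB (f : T1 -> T2) :
  continuous_on A OA B OB f -> forall x, A x -> B (f x).
Proof. by case. Qed.

Lemma continuous_on_preimage A OA B OB (f : T1 -> T2) V :
  continuous_on A OA B OB f -> OB V -> OA (A `&` f @^-1` V).
Proof. by case=> _; apply. Qed.

Lemma continuous_on_locally A OA B OB (f : T1 -> T2) : is_topology A OA ->
  (forall x, A x -> B (f x)) ->
  (forall x V, A x -> OB V -> V (f x) ->
     exists2 U, OA U & U x /\ (forall y, U y -> V (f y))) ->
  continuous_on A OA B OB f.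
Proof.
move=> tA AB H; split=> // V OV; apply: (open_locally tA) => x [Ax Vfx].
have [U OU [Ux UV]] := H x V Ax OV Vfx.
exists U => //; split=> // y Uy; split; [exact: (open_sub tA OU)|exact: UV].
Qed.

Lemma eq_continuous_on A OA B OB (f g : T1 -> T2) : (forall x, A x -> f x = g x) ->
  continuous_on A OA B OB f -> continuous_on A OA B OB g.
Proof.
move=> fg [fAB fc]; split=> [x Ax|V OV]; first by rewrite -fg //; apply: fAB.
suff -> : A `&` g @^-1` V = A `&` f @^-1` V by apply: fc.
by apply/seteqP; split=> x [Ax]; rewrite /preimage /= ?fg // => ?; split.
Qed.

Lemma continuous_on_subdom A OA B OB (f : T1 -> T2) U :
  continuous_on A OA B OB f -> U `<=` A -> continuous_on U (subspace_top OA U) B OB f.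
Proof.
move=> [fAB fc] UA; split=> [x Ux|V OV]; first exact/fAB/UA.
exists (A `&` f @^-1` V); first exact: fc.
apply/seteqP; split=> x; [move=> [Ux Vfx]; split=> //; split=> //; exact: UA|by move=> [[]]].
Qed.

Lemma continuous_on_subcod A OA B OB (f : T1 -> T2) C : continuous_on A OA B OB f ->
  (forall x, A x -> C (f x)) -> continuous_on A OA C (subspace_top OB C) f.
Proof.
move=> [fAB fc] AC; split=> // V' [V OV ->].
suff -> : A `&` f @^-1` (V `&` C) = A `&` f @^-1` V by apply: fc.
apply/seteqP; split=> x /=; [by move=> [Ax []]|move=> [Ax Vx]; do !split=> //; exact: AC].
Qed.

End Continuity.

Lemma continuous_on_comp {T1 T2 T3 : Type} (A : set T1) OA (B : set T2) OB
    (C : set T3) OC (f : T1 -> T2) (g : T2 -> T3) :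
  continuous_on A OA B OB f -> continuous_on B OB C OC g ->
  continuous_on A OA C OC (g \o f).
Proof.
move=> [fAB fc] [gBC gc]; split=> [x Ax|W OW]; first exact/gBC/fAB.
suff -> : A `&` (g \o f) @^-1` W = A `&` f @^-1` (B `&` g @^-1` W) by apply/fc/gc.
apply/seteqP; split=> x /= [Ax H]; split=> //; [split=> //; exact: fAB|by case: H].
Qed.

Lemma continuous_on_id {T : Type} (A : set T) O :
  is_topology A O -> continuous_on A O A O id.
Proof.
move=> tO; split=> // V OV; suff -> : A `&` id @^-1` V = V by [].
by apply/seteqP; split=> [x []//|x Vx]; split=> //; exact: open_sub tO OV x Vx.
Qed.

Notation box U V := [set q | U q.1 /\ V q.2].

Section Product.
Context {T1 T2 : Type}.

Lemma prod_top_box (O1 : set (set T1)) (O2 : set (set T2)) U V :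
  O1 U -> O2 V -> prod_top O1 O2 (box U V).
Proof. by move=> OU OV p [Up Vp]; exists U, V; split. Qed.

Lemma is_topology_prod (A1 : set T1) O1 (A2 : set T2) O2 :
  is_topology A1 O1 -> is_topology A2 O2 -> is_topology (box A1 A2) (prod_top O1 O2).
Proof.
move=> t1 t2; split.
- move=> W OW p Wp; have [U [V [OU OV Up Vp _]]] := OW p Wp.
  by split; [exact: open_sub t1 OU _ Up|exact: open_sub t2 OV _ Vp].
- by move=> p.
- exact: prod_top_box (open_full t1) (open_full t2).
- move=> F FO p [W FW Wp]; have [U [V [OU OV Up Vp sW]]] := FO W FW p Wp.
  by exists U, V; split=> // q Bq; exists W => //; exact: sW.
- move=> W1 W2 O1W O2W p [W1p W2p].
  have [U [V [OU OV Up Vp s1]]] := O1W p W1p.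
  have [U' [V' [OU' OV' Up' Vp' s2]]] := O2W p W2p.
  exists (U `&` U'), (V `&` V'); split; [exact: openI_on t1 OU OU'|exact: openI_on t2 OV OV'|by []|by []|].
  by move=> q [[]?? []??]; split; [apply: s1|apply: s2].
Qed.

Lemma continuous_on_pair {T0 : Type} (C : set T0) OC (A1 : set T1) O1 (A2 : set T2) O2
    (P : set (T1 * T2)) (f1 : T0 -> T1) (f2 : T0 -> T2) :
  is_topology C OC -> continuous_on C OC A1 O1 f1 -> continuous_on C OC A2 O2 f2 ->
  (forall x, C x -> P (f1 x, f2 x)) ->
  continuous_on C OC P (subspace_top (prod_top O1 O2) P) (fun x => (f1 x, f2 x)).
Proof.
move=> tC c1 c2 CP; apply: continuous_on_locally => // x V' Cx [W OW ->] [Wx _].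
have [U [V [OU OV Ux Vx sUV]]] := OW _ Wx.
exists ((C `&` f1 @^-1` U) `&` (C `&` f2 @^-1` V)).
  by apply: (openI_on tC); [exact: continuous_on_preimage c1 OU|exact: continuous_on_preimage c2 OV].
split; first by do !split.
by move=> y [[Cy U1] [_ V2]]; split; [exact: sUV|exact: CP].
Qed.

Lemma continuous_on_fst (A1 : set T1) O1 (A2 : set T2) O2 (P : set (T1 * T2)) :
  is_topology A2 O2 -> (forall p, P p -> A1 p.1 /\ A2 p.2) ->
  continuous_on P (subspace_top (prod_top O1 O2) P) A1 O1 fst.
Proof.
move=> t2 PA; split=> [p /PA []//|U OU].
exists (box U A2); first exact: prod_top_box (open_full t2).
apply/seteqP; split=> p /=; first by move=> [Pp Up]; do !split=> //; case: (PA p Pp).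
by move=> [[]].
Qed.

Lemma continuous_on_snd (A1 : set T1) O1 (A2 : set T2) O2 (P : set (T1 * T2)) :
  is_topology A1 O1 -> (forall p, P p -> A1 p.1 /\ A2 p.2) ->
  continuous_on P (subspace_top (prod_top O1 O2) P) A2 O2 snd.
Proof.
move=> t1 PA; split=> [p /PA []//|V OV].
exists (box A1 V); first exact: prod_top_box (open_full t1) OV.
apply/seteqP; split=> p /=; first by move=> [Pp Vp]; do !split=> //; case: (PA p Pp).
by move=> [[]].
Qed.

Lemma hausdorff_on_prod (A1 : set T1) O1 (A2 : set T2) O2 (P : set (T1 * T2)) :
  (forall p, P p -> A1 p.1 /\ A2 p.2) -> is_topology A1 O1 -> is_topology A2 O2 ->
  hausdorff_on A1 O1 -> hausdorff_on A2 O2 ->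
  hausdorff_on P (subspace_top (prod_top O1 O2) P).
Proof.
move=> PA t1 t2 h1 h2 p q Pp Pq pq.
have [[A1p A2p] [A1q A2q]] := (PA p Pp, PA q Pq).
have [e1|n1] := pselect (p.1 = q.1).
- have n2 : p.2 <> q.2.
    by move=> e2; apply: pq; move: e1 e2; case: p {Pp A1p A2p} => ??; case: q {Pq A1q A2q} => ?? /= -> ->.
  have [U [V [OU OV Up Vq UV]]] := h2 _ _ A2p A2q n2.
  exists (box A1 U `&` P), (box A1 V `&` P); split.
  + by exists (box A1 U) => //; exact: prod_top_box (open_full t1) OU.
  + by exists (box A1 V) => //; exact: prod_top_box (open_full t1) OV.
  + by [].
  + by [].
  + apply/seteqP; split=> // r [[[_ Ur] _] [[_ Vr] _]].
    by have : (U `&` V) r.2 by []; rewrite UV.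
- have [U [V [OU OV Up Vq UV]]] := h1 _ _ A1p A1q n1.
  exists (box U A2 `&` P), (box V A2 `&` P); split.
  + by exists (box U A2) => //; exact: prod_top_box OU (open_full t2).
  + by exists (box V A2) => //; exact: prod_top_box OV (open_full t2).
  + by [].
  + by [].
  + apply/seteqP; split=> // r [[[Ur _] _] [[Vr _] _]].
    by have : (U `&` V) r.1 by []; rewrite UV.
Qed.

Lemma second_countable_on_prod (O1 : set (set T1)) (O2 : set (set T2)) (P : set (T1 * T2)) :
  second_countable_on O1 -> second_countable_on O2 ->
  second_countable_on (subspace_top (prod_top O1 O2) P).
Proof.
move=> [B1 [cB1 B1O b1]] [B2 [cB2 B2O b2]].
exists ((fun UV : set T1 * set T2 => box UV.1 UV.2 `&` P) @` (B1 `*` B2)); split.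
- exact: (sub_countable (card_image_le _ _) (countableX cB1 cB2)).
- move=> _ [[U V] [/= BU BV] <-]; exists (box U V) => //.
  exact: prod_top_box (B1O _ BU) (B2O _ BV).
- move=> _ x [W OW ->] [Wx Px].
  have [U [V [OU OV Ux Vx sW]]] := OW x Wx.
  have [U' BU' [U'x U'U]] := b1 U _ OU Ux.
  have [V' BV' [V'x V'V]] := b2 V _ OV Vx.
  exists (box U' V' `&` P); first by exists (U', V').
  split=> // y [[? ?] ?]; split=> //; apply: sW; split; [exact: U'U|exact: V'V].
Qed.

End Product.

Definition img_top {T T' : Type} (f : T -> T') (O : set (set T)) : set (set T') :=
  [set V | exists2 U, O U & V = f @` U].

Section ImageTopology.
Context {T T' : Type} (A : set T) (O : set (set T)) (f : T -> T').
Hypotheses (tO : is_topology A O)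
  (f_inj : forall x y, A x -> A y -> f x = f y -> x = y).

Lemma img_topE V : img_top f O V <-> V `<=` f @` A /\ O (A `&` f @^-1` V).
Proof.
split=> [[U OU ->]|[VA OV]].
  split; first by move=> _ [u Uu <-]; exists u => //; exact: (open_sub tO OU).
  suff -> : A `&` f @^-1` (f @` U) = U by [].
  apply/seteqP; split=> [x [Ax [u Uu fu]]|x Ux]; last first.
    by split; [exact: (open_sub tO OU)|exists x].
  by rewrite -(f_inj (open_sub tO OU Uu) Ax fu).
exists (A `&` f @^-1` V) => //; apply/seteqP; split=> [y Vy|_ [x [Ax Vfx] <-]] //.
by have [x Ax fx] := VA _ Vy; exists x => //; split=> //; rewrite /preimage /= fx.
Qed.

Lemma is_topology_img : is_topology (f @` A) (img_top f O).
Proof.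
split.
- by move=> V /img_topE [].
- by exists set0; [exact: open_set0 tO|rewrite image_set0].
- by exists A => //; exact: open_full tO.
- move=> F FO; exists (\bigcup_(U in [set U | O U /\ F (f @` U)]) U).
    by apply: open_bigcup tO _ => U [].
  apply/seteqP; split=> y.
  + move=> [V FV Vy]; have [U OU eV] := FO V FV.
    by move: Vy; rewrite eV => -[u Uu <-]; exists u => //; exists U => //; split=> //; rewrite -eV.
  + by move=> [u [U [_ FU] Uu] <-]; exists (f @` U) => //; exists u.
- move=> V1 V2 /img_topE [s1 o1] /img_topE [s2 o2]; apply/img_topE; split.
    by move=> y [/s1].
  suff -> : A `&` f @^-1` (V1 `&` V2) = (A `&` f @^-1` V1) `&` (A `&` f @^-1` V2).
    exact: openI_on tO o1 o2.
  by apply/seteqP; split=> x; [move=> [Ax [??]]|move=> [[Ax ?] [_ ?]]].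
Qed.

Lemma continuous_on_into_img {T0 : Type} (C : set T0) OC (g : T0 -> T) :
  continuous_on C OC A O g -> continuous_on C OC (f @` A) (img_top f O) (f \o g).
Proof.
move=> [gA gc]; split=> [x Cx|V /img_topE [VA OV]]; first by exists (g x) => //; exact: gA.
suff -> : C `&` (f \o g) @^-1` V = C `&` g @^-1` (A `&` f @^-1` V) by apply: gc.
by apply/seteqP; split=> x [Cx H]; split=> //; [split=> //; exact: gA|case: H].
Qed.

Lemma continuous_on_from_img {T0 : Type} (D : set T0) OD (g : T' -> T0) :
  continuous_on A O D OD (g \o f) -> continuous_on (f @` A) (img_top f O) D OD g.
Proof.
move=> [gA gc]; split=> [_ [x Ax <-]|W OW]; first exact: gA.
apply/img_topE; split; first by move=> y [].
suff -> : A `&` f @^-1` (f @` A `&` g @^-1` W) = A `&` (g \o f) @^-1` W by apply: gc.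
apply/seteqP; split=> x [Ax H]; split=> //; first by case: H.
Qed.

Lemma hausdorff_on_img : hausdorff_on A O -> hausdorff_on (f @` A) (img_top f O).
Proof.
move=> hA _ _ [x Ax <-] [y Ay <-] nfxy.
have nxy : x <> y by move=> exy; apply: nfxy; rewrite exy.
have [U [V [OU OV Ux Vy UV]]] := hA x y Ax Ay nxy.
exists (f @` U), (f @` V); split; [by exists U|by exists V|by exists x|by exists y|].
apply/seteqP; split=> // z [[u Uu fuz] [v Vv fvz]].
have e : v = u by apply: f_inj (open_sub tO OV Vv) (open_sub tO OU Uu) _; rewrite fvz fuz.
have : (U `&` V) u by split=> //; rewrite -e.
by rewrite UV.
Qed.

Lemma second_countable_on_img : second_countable_on O -> second_countable_on (img_top f O).
Proof.
move=> [B [cB BO bB]]; exists ((fun U => f @` U) @` B); split.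
- exact: (sub_countable (card_image_le _ _) cB).
- by move=> _ [U BU <-]; exists U => //; exact: BO.
- move=> _ _ [U OU ->] [x Ux <-].
  have [V BV [Vx VU]] := bB U x OU Ux.
  exists (f @` V); first by exists V.
  by split; [exists x|move=> _ [v Vv <-]; exists v => //; exact: VU].
Qed.

End ImageTopology.

Lemma compact_in_image {T T' : Type} (A : set T) O (B : set T') OB (f : T -> T') K :
  continuous_on A O B OB f -> compact_in A O K -> compact_in B OB (f @` K).
Proof.
move=> [fAB fc] [KA cK]; split; first by move=> _ [k Kk <-]; exact/fAB/KA.
move=> F FOB cov.
pose G := [set U | exists2 V, F V & U = A `&` f @^-1` V].
have [H [fH HG] KH] : exists2 H, finite_set H /\ H `<=` G & K `<=` \bigcup_(U in H) U.
  apply: cK.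
  - by move=> U [V FV ->]; exact: fc (FOB V FV).
  - move=> k Kk; have [V FV Vfk] := cov (f k) (ex_intro2 _ _ k Kk erefl).
    by exists (A `&` f @^-1` V); [exists V|split=> //; exact: KA].
pose ch U := hilbert (fun V => F V /\ U = A `&` f @^-1` V) set0.
have chP U : H U -> F (ch U) /\ U = A `&` f @^-1` (ch U).
  by move=> /HG [V FV eU]; apply: (@hilbertP _ (fun V => F V /\ U = A `&` f @^-1` V)); exists V.
exists (ch @` H); first by split; [exact: finite_image|move=> _ [U HU <-]; exact: (chP U HU).1].
move=> _ [k Kk <-]; have [U HU Uk] := KH k Kk.
exists (ch U); first by exists U.
by move: Uk; rewrite {1}(chP U HU).2 => -[].
Qed.

Section OpenLocallyInjective.
Context {T : Type} {X : topologicalType} (A : set T) (O : set (set T)) (f : T -> X).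
Hypotheses (tO : is_topology A O) (f_cont : continuous_on A O setT open_X f)
  (f_open : forall U, O U -> open (f @` U))
  (f_locinj : forall a, A a -> exists2 U, O U &
     U a /\ (forall x y, U x -> U y -> f x = f y -> x = y)).

Lemma local_homeo_on_open_locinj : local_homeo_on A O setT open_X f.
Proof.
split=> // a Aa; have [U OU [Ua Uinj]] := f_locinj Aa.
exists U; split=> //; first exact: f_open.
split.
  apply: continuous_on_subcod; first exact: continuous_on_subdom f_cont (open_sub tO OU).
  by move=> x Ux; exists x.
pose g y := hilbert (fun x => U x /\ f x = y) a.
have gP y : (f @` U) y -> U (g y) /\ f (g y) = y.
  by move=> [x Ux fx]; apply: (@hilbertP _ (fun x => U x /\ f x = y)); exists x.
have gf x : U x -> g (f x) = x.
  by move=> Ux; have [] := gP (f x) (ex_intro2 _ _ x Ux erefl); move=> Ug fg; apply: Uinj.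
exists g; split.
- split=> [y /gP [] //|V' [V OV ->]].
  exists (f @` (V `&` U)); first exact/f_open/(openI_on tO).
  apply/seteqP; split=> y.
  + move=> [fUy [Vgy Ugy]]; split=> //; exists (g y); [by split|exact: (gP _ fUy).2].
  + move=> [[x [Vx Ux] <-] fUy]; split=> //; rewrite /preimage /= gf //.
- exact: gf.
- by move=> y /gP [].
Qed.

(* A clopen neighbourhood C of f a inside f @` U is compact, and U `&` f^-1 C
   is homeomorphic to it. *)
Lemma locally_compact_on_open_locinj :
  compact [set: X] -> zero_dim X -> locally_compact_on A O.
Proof.
move=> cX zX a Aa; have [U OU [Ua Uinj]] := f_locinj Aa.
have [C [[Co Ccl] Cfa CU]] := zX _ (f a) (f_open OU) (ex_intro2 _ _ a Ua erefl).
pose K := U `&` (A `&` f @^-1` C).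
have OK : O K by apply: openI_on tO OU (continuous_on_preimage f_cont _).
have KA : K `<=` A by move=> x [Ux _]; exact: open_sub tO OU x Ux.
exists K, K; split.
- exact: OK.
- by split=> //; split.
- by [].
split=> // F FO KF.
have cC : compact C := subclosed_compact Ccl cX (@subsetT _ C).
have [] := @compact_cover_compact X (f a) C cC _ F (fun G => f @` (G `&` U)).
- by move=> G FG; apply: f_open; apply: openI_on tO (FO _ FG) OU.
- move=> y Cy; have [x Ux fx] := CU y Cy.
  have Kx : K x by split=> //; split; [exact: open_sub tO OU _ Ux|rewrite /preimage/= fx].
  by have [G FG Gx] := KF x Kx; exists G => //; exists x.
move=> D' sD' cov; exists [set` D'].
  split; first exact: finite_fset.
  by move=> G GD; have := sD' G GD; rewrite in_setE.
move=> k [Uk [Ak Cfk]]; have [G GD [u [Gu Uu] fuk]] := cov _ Cfk.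
by exists G => //; rewrite (Uinj _ _ Uk Uu (esym fuk)).
Qed.

End OpenLocallyInjective.

Section TubeLemma.
Context {T1 T2 : Type} (A1 : set T1) (O1 : set (set T1)) (A2 : set T2) (O2 : set (set T2)).
Hypotheses (t1 : is_topology A1 O1) (t2 : is_topology A2 O2)
  (c1 : compact_in A1 O1 A1) (c2 : compact_in A2 O2 A2).

Lemma tube_slice (WW : set (set (T1 * T2))) a : WW `<=` prod_top O1 O2 ->
  box A1 A2 `<=` \bigcup_(W in WW) W -> A1 a ->
  exists N, [/\ O1 N, N a & exists2 ZZ, finite_set ZZ /\ ZZ `<=` WW &
                                  box N A2 `<=` \bigcup_(Z in ZZ) Z].
Proof.
move=> WWO cov Aa.
pose VV := [set V | O2 V /\ exists UZ : set T1 * set (T1 * T2),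
   [/\ O1 UZ.1, UZ.1 a, WW UZ.2 & box UZ.1 V `<=` UZ.2]].
have [H [fH HV] A2H] : exists2 H, finite_set H /\ H `<=` VV & A2 `<=` \bigcup_(V in H) V.
  apply: (c2.2).
  - by move=> V [].
  - move=> b Ab; have [Z WWZ Zab] := cov (a, b) (conj Aa Ab).
    have [U [V [OU OV Ua Vb sZ]]] := WWO Z WWZ _ Zab.
    by exists V => //; split=> //; exists (U, Z).
pose ch V := hilbert (fun UZ : set T1 * set (T1 * T2) =>
   [/\ O1 UZ.1, UZ.1 a, WW UZ.2 & box UZ.1 V `<=` UZ.2]) (A1, set0).
have chP V : H V -> [/\ O1 (ch V).1, (ch V).1 a, WW (ch V).2 & box (ch V).1 V `<=` (ch V).2].
  move=> /HV [_ [UZ P]].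
  by apply: (@hilbertP _ (fun UZ : set T1 * set (T1 * T2) =>
   [/\ O1 UZ.1, UZ.1 a, WW UZ.2 & box UZ.1 V `<=` UZ.2])); exists UZ.
exists (A1 `&` \bigcap_(U in (fun V => (ch V).1) @` H) U); split.
- apply: open_finite_bigcap t1 (finite_image _ fH) _.
  by move=> _ [V HV' <-]; case: (chP V HV').
- by split=> // _ [V HV' <-]; case: (chP V HV').
- exists ((fun V => (ch V).2) @` H).
    split; first exact: finite_image.
    by move=> _ [V HV' <-]; case: (chP V HV').
  move=> [x b] [/= [Ax Ix] Ab]; have [V HV' Vb] := A2H b Ab.
  exists (ch V).2; first by exists V.
  case: (chP V HV') => _ _ _; apply; split=> //=.
  by apply: Ix; exists V.
Qed.

Lemma compact_in_box (WW : set (set (T1 * T2))) : WW `<=` prod_top O1 O2 ->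
  box A1 A2 `<=` \bigcup_(W in WW) W ->
  exists2 ZZ, finite_set ZZ /\ ZZ `<=` WW & box A1 A2 `<=` \bigcup_(Z in ZZ) Z.
Proof.
move=> WWO cov.
pose NN := [set N | O1 N /\ exists2 ZZ, finite_set ZZ /\ ZZ `<=` WW &
                                  box N A2 `<=` \bigcup_(Z in ZZ) Z].
have [M [fM MN] A1M] : exists2 M, finite_set M /\ M `<=` NN & A1 `<=` \bigcup_(N in M) N.
  apply: (c1.2); first by move=> N [].
  move=> a Aa; have [N [ON Na [ZZ fZZ sZZ]]] := tube_slice WWO cov Aa.
  by exists N => //; split=> //; exists ZZ.
pose ch N := hilbert (fun ZZ => (finite_set ZZ /\ ZZ `<=` WW) /\
                                  box N A2 `<=` \bigcup_(Z in ZZ) Z) set0.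
have chP N : M N -> (finite_set (ch N) /\ ch N `<=` WW) /\
                                  box N A2 `<=` \bigcup_(Z in ch N) Z.
  move=> /MN [_ [ZZ fZZ sZZ]].
  by apply: (@hilbertP _ (fun ZZ => (finite_set ZZ /\ ZZ `<=` WW) /\
                                  box N A2 `<=` \bigcup_(Z in ZZ) Z)); exists ZZ.
exists (\bigcup_(N in M) ch N); first split.
- by apply: bigcup_finite => // N MN'; case: (chP N MN') => [[]].
- by move=> Z [N MN' chZ]; case: (chP N MN') => [[_ +] _]; apply.
- move=> [x b] [/= Ax Ab]; have [N MN' Nx] := A1M x Ax.
  case: (chP N MN') => _ /(_ (x, b) (conj Nx Ab)) [Z chZ Zxb].
  by exists Z => //; exists N.
Qed.

Lemma compact_in_closed_prod (P : set (T1 * T2)) : P `<=` box A1 A2 ->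
  prod_top O1 O2 (box A1 A2 `\` P) ->
  compact_in P (subspace_top (prod_top O1 O2) P) P.
Proof.
move=> PA Pc; split=> // GG GGO cov.
pose WW := [set W | prod_top O1 O2 W /\
   (W `<=` ~` P \/ exists2 G, GG G & P `&` W `<=` G)].
have covW : box A1 A2 `<=` \bigcup_(W in WW) W.
  move=> p Ap; have [Pp|nPp] := pselect (P p).
  - have [G GGG Gp] := cov p Pp; have [W0 OW0 eG] := GGO G GGG.
    exists W0; first by split=> //; right; exists G => //; rewrite eG setIC.
    by move: Gp; rewrite eG => -[].
  - exists (box A1 A2 `\` P) => //; split=> //; left; by move=> q [].
have [ZZ [fZZ ZW] covZ] := @compact_in_box WW (fun W (HW : WW W) => proj1 HW) covW.
pose ch Z := hilbert (fun G => GG G /\ P `&` Z `<=` G) set0.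
exists [set G | GG G /\ (ch @` ZZ) G]; first split.
- by apply: (sub_finite_set _ (finite_image ch fZZ)) => G [].
- by move=> G [].
- move=> p Pp; have [Z ZZZ Zp] := covZ p (PA p Pp).
  have [_ [ZP|[G GGG sG]]] := ZW Z ZZZ; first by have := ZP p Zp.
  have [chG chs] : GG (ch Z) /\ P `&` Z `<=` ch Z.
    by apply: (@hilbertP _ (fun G => GG G /\ P `&` Z `<=` G)); exists G.
  by exists (ch Z); [split=> //; exists Z|apply: chs].
Qed.

End TubeLemma.

Definition swap {X : Type} (p : X * X) : X * X := (p.2, p.1).

Section EtaleFacts.
Context {X : topologicalType} (R : set (X * X)) (OR : set (set (X * X))).
Hypothesis eR : etale_eq_rel R OR.

Lemma etale_equivalence : Defs.equivalence_rel R. Proof. by case: eR => [[]]. Qed.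
Lemma etale_refl x : R (x, x). Proof. by case: etale_equivalence. Qed.
Lemma etale_sym x y : R (x, y) -> R (y, x).
Proof. by case: etale_equivalence => _ + _; apply. Qed.
Lemma etale_trans x y z : R (x, y) -> R (y, z) -> R (x, z).
Proof. by case: etale_equivalence => _ _; apply. Qed.
Lemma etale_swap p : R p -> R (swap p).
Proof. by case: p => x y; exact: etale_sym. Qed.
Lemma etale_countable x : countable [set y | R (x, y)].
Proof. by case: eR => [[_ +]] *; apply. Qed.
Lemma etale_topology : is_topology R OR. Proof. by case: eR => _ []. Qed.
Lemma etale_hausdorff : hausdorff_on R OR. Proof. by case: eR => _ [_ []]. Qed.
Lemma etale_second_countable : second_countable_on OR. Proof. by case: eR => _ [_ []]. Qed.
Lemma etale_mul_cont : continuous_on (fibprod R R) (fibprod_top R OR R OR) R OR rs_map.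
Proof. by case: eR. Qed.
Lemma etale_fst_local_homeo : local_homeo_on R OR setT open_X fst. Proof. by case: eR. Qed.
Lemma etale_swap_cont : continuous_on R OR R OR swap.
Proof. by case: eR => _ _ _ [] + _. Qed.

Lemma etale_fst_cont : continuous_on R OR setT open_X fst.
Proof.
apply: continuous_on_locally etale_topology _ _ => // a V Ra OV Vfa.
have [U [OU Ua _ [[_ c] _]]] := etale_fst_local_homeo.2 a Ra.
have : subspace_top open_X (fst @` U) ((fst @` U) `&` V) by exists V => //; rewrite setIC.
move=> /c [W OW e].
exists (W `&` U); first exact: openI_on etale_topology OW OU.
split.
- have : (U `&` fst @^-1` (fst @` U `&` V)) a by split=> //; split=> //; exists a.
  by rewrite e.
- move=> b Wb; have : (U `&` fst @^-1` (fst @` U `&` V)) b by rewrite e.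
  by case=> _ [].
Qed.

Lemma etale_fst_open U : OR U -> open (fst @` U).
Proof.
move=> OU.
have -> : fst @` U = \bigcup_(V in [set V : set X | open V /\ V `<=` fst @` U]) V.
  apply/seteqP; split=> [_ [a Ua <-]|y [V [_ VU] Vy]]; last exact: VU.
  have Ra := open_sub etale_topology OU Ua.
  have [B [OB Ba oB [_ [g [[_ gc] gf fg]]]]] := etale_fst_local_homeo.2 a Ra.
  have : subspace_top OR B (U `&` B) by exists U.
  move=> /gc [V0 oV0 e].
  exists (V0 `&` fst @` B); [split; [exact: openI|] |].
  + move=> y Vy; have : (fst @` B `&` g @^-1` (U `&` B)) y by rewrite e.
    by move=> [fBy [Ugy Bgy]]; exists (g y) => //; exact: fg.
  + have : (fst @` B `&` g @^-1` (U `&` B)) a.1 by split; [exists a|rewrite /preimage/= gf].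
    by rewrite e.
by apply: bigcup_open => V [].
Qed.

Lemma etale_bisection a U : OR U -> U a -> exists2 B, OR B &
  [/\ B a, B `<=` U & forall x y, B x -> B y -> x.1 = y.1 -> x = y].
Proof.
move=> OU Ua; have Ra := open_sub etale_topology OU Ua.
have [B [OB Ba _ [_ [g [_ gf _]]]]] := etale_fst_local_homeo.2 a Ra.
exists (U `&` B); [exact: openI_on etale_topology OU OB|split; [by split|by move=> ? []|]].
by move=> x y [_ Bx] [_ By] e; rewrite -(gf x Bx) -(gf y By) e.
Qed.

Lemma etale_snd_cont : continuous_on R OR setT open_X snd.
Proof.
apply: eq_continuous_on (continuous_on_comp etale_swap_cont etale_fst_cont).
by move=> [].
Qed.

Lemma etale_mul_cont_comp {T0 : Type} (C : set T0) OC (f1 f2 : T0 -> X * X) :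
  is_topology C OC -> continuous_on C OC R OR f1 -> continuous_on C OC R OR f2 ->
  (forall x, C x -> (f1 x).2 = (f2 x).1) ->
  continuous_on C OC R OR (fun x => ((f1 x).1, (f2 x).2)).
Proof.
move=> tC c1 c2 e.
have c12 := continuous_on_pair tC c1 c2 (P := fibprod R R)
  (fun x Cx => And3 (continuous_on_mapsto c1 Cx) (continuous_on_mapsto c2 Cx) (e x Cx)).
exact: eq_continuous_on (continuous_on_comp c12 etale_mul_cont).
Qed.

(* Near a diagonal point, a bisection B meets the diagonal in the open set of
   those p in B whose image (p.1, p.1) again lies in B. *)
Lemma etale_diagonal_open : OR [set p | p.1 = p.2].
Proof.
apply: (open_locally etale_topology) => a ea.
have Ra : R a by case: a ea => x y /= <-; exact: etale_refl.
have [B OB [Ba _ Binj]] := etale_bisection (open_full etale_topology) Ra.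
have dc : continuous_on R OR R OR (fun p => (p.1, p.1)).
  exact: eq_continuous_on
    (etale_mul_cont_comp etale_topology (continuous_on_id etale_topology) etale_swap_cont _).
exists (B `&` (R `&` (fun p => (p.1, p.1)) @^-1` B)).
  exact: openI_on etale_topology OB (continuous_on_preimage dc OB).
split.
- split=> //; split=> //; rewrite /preimage /=.
  by move: Ba; case: a ea {Ra} => x y /= ->.
- move=> p [Bp [Rp Bdp]].
  by have := Binj _ _ Bdp Bp erefl; case: p {Bp Rp Bdp} => x y /= [] ->.
Qed.

Lemma etale_unit_cont : continuous_on setT open_X R OR (fun x => (x, x)).
Proof.
apply: continuous_on_locally (is_topology_open_X X) _ _ => [x _|x V _ OV Vx].
  exact: etale_refl.
exists (fst @` (V `&` [set p | p.1 = p.2])).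
  exact/etale_fst_open/(openI_on etale_topology OV etale_diagonal_open).
split; first by exists (x, x).
by move=> w [[y z] [Vyz /= eyz] <-]; move: Vyz; rewrite -eyz.
Qed.

End EtaleFacts.

Section Join.
Context {X : topologicalType} (R : set (X * X)) (OR : set (set (X * X)))
  (S : set (X * X)) (OS : set (set (X * X))).
Hypotheses (eR : etale_eq_rel R OR) (eS : etale_eq_rel S OS).
Hypothesis RS_diag : R `&` S = [set p | p.1 = p.2].
(* [g] is the inverse of the transversality homeomorphism; only its
   continuity and its compatibility with r and s are needed. *)
Variable g : (X * X) * (X * X) -> (X * X) * (X * X).
Hypotheses (g_cont : continuous_on (fibprod S R) (fibprod_top S OS R OR)
                                   (fibprod R S) (fibprod_top R OR S OS) g)
  (g_rng : forall q, fibprod S R q -> rng2 (g q) = rng2 q)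
  (g_src : forall q, fibprod S R q -> src2 (g q) = src2 q).

Local Notation FRS := (fibprod R S).
Local Notation FSR := (fibprod S R).
Local Notation TRS := (fibprod_top R OR S OS).
Local Notation J := (rs_map @` FRS).
Local Notation W := (img_top rs_map TRS).
Local Notation D := [set p : X * X | p.1 = p.2].

Let tR := etale_topology eR.
Let tS := etale_topology eS.

Lemma is_topology_fibprod : is_topology FRS TRS.
Proof. by apply: is_topology_subspace (is_topology_prod tR tS) _ => q [? ? _]; split. Qed.

Lemma g_fibprod q : FSR q -> FRS (g q). Proof. exact: (continuous_on_mapsto g_cont). Qed.

Lemma diag_of_RS x y : R (x, y) -> S (x, y) -> x = y.
Proof.
move=> Rxy Sxy; have : (R `&` S) (x, y) by split.
by rewrite RS_diag.
Qed.

Lemma rs_map_inj p q : FRS p -> FRS q -> rs_map p = rs_map q -> p = q.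
Proof.
case: p => [[a b] [c d]] [/= Rab Scd ebc]; case: q => [[a' b'] [c' d']] [/= Rab' Scd' ebc'].
rewrite /rs_map /= => -[ea ed].
rewrite -ebc in Scd; rewrite -ebc' -ed in Scd'; rewrite -ea in Rab'; rewrite -ebc -ebc' -ea -ed.
have Rbb : R (b, b') := etale_trans eR (etale_sym eR Rab) Rab'.
have Sbb : S (b, b') := etale_trans eS Scd (etale_sym eS Scd').
by rewrite (diag_of_RS Rbb Sbb).
Qed.



Lemma J_equivalence : Defs.equivalence_rel J.
Proof.
split.
- move=> x; exists ((x, x), (x, x)) => //.
  by split=> /=; [exact: (etale_refl eR)|exact: (etale_refl eS)|].
- move=> x z [[[a b] [c d]] [/= Rab Scd ebc] [<- <-]].
  have F' : FSR ((d, c), (b, a)) by split=> /=; [exact: (etale_sym eS)|exact: (etale_sym eR)|].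
  exists (g ((d, c), (b, a))); first exact: g_fibprod.
  by rewrite /rs_map; have := g_rng F'; have := g_src F'; rewrite /rng2 /src2 /= => -> ->.
- move=> x y z [[[a b] [c d]] [/= Rab Scd ebc] [ex ey]]
    [[[a' b'] [c' d']] [/= Rab' Scd' ebc'] [ey' ez]].
  have F' : FSR ((c, d), (a', b')) by split=> //=; rewrite ey ey'.
  case: (g ((c, d), (a', b'))) (g_fibprod F') (g_rng F') (g_src F')
    => [[u v] [w t]] [/= Ruv Swt evw].
  rewrite /rng2 /src2 /= => eu et.
  exists ((a, v), (w, d')); last by rewrite /rs_map /= ex ez.
  split=> //=.
  - by apply: (etale_trans eR Rab); rewrite ebc -eu.
  - by apply: (etale_trans eS Swt); rewrite et ebc'.
Qed.

Lemma R_sub_J : R `<=` J.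
Proof. by move=> [x y] Rxy; exists ((x, y), (y, y)) => //; split=> //; exact: (etale_refl eS). Qed.

Lemma S_sub_J : S `<=` J.
Proof. by move=> [x y] Sxy; exists ((x, x), (x, y)) => //; split=> //; exact: (etale_refl eR). Qed.

Lemma join_relE : join_rel R S = J.
Proof.
apply/seteqP; split=> [p Jp|_ [[[a b] [c d]] [/= Rab Scd ebc] <-]].
  exact: Jp J_equivalence R_sub_J S_sub_J.
move=> E [_ _ Etrans] RE SE; apply: (Etrans a b d); first exact: RE.
by rewrite ebc; apply: SE.
Qed.

Lemma J_countable x : countable [set y | J (x, y)].
Proof.
apply: (sub_countable (subset_card_le _)
  (bigcup_countable (F := fun y => [set z | S (y, z)]) (etale_countable eR x) _)).
- move=> z [[[a b] [c d]] [/= Rab Scd ebc] [ea ed]].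
  by exists b; [rewrite /= -ea|rewrite /= ebc -ed].
- by move=> y _; exact: (etale_countable eS).
Qed.

Definition rs_inv (j : X * X) : (X * X) * (X * X) :=
  hilbert (fun q => FRS q /\ rs_map q = j) ((j.1, j.1), (j.1, j.2)).

Lemma rs_invP j : J j -> [/\ FRS (rs_inv j), (rs_inv j).1.1 = j.1 & (rs_inv j).2.2 = j.2].
Proof.
move=> [q Fq qj].
have [Fp e] : FRS (rs_inv j) /\ rs_map (rs_inv j) = j.
  by apply: (@hilbertP _ (fun q => FRS q /\ rs_map q = j)); exists q.
by split=> //; [exact: (congr1 fst e)|exact: (congr1 snd e)].
Qed.

Lemma rs_invK q : FRS q -> rs_inv (rs_map q) = q.
Proof.
move=> Fq; have [Fp e1 e2] := rs_invP (ex_intro2 _ _ q Fq erefl).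
by apply: rs_map_inj Fp Fq _; rewrite /rs_map e1 e2.
Qed.

Lemma is_topology_J : is_topology J W.
Proof. exact: is_topology_img is_topology_fibprod rs_map_inj. Qed.

Lemma rs_inv_cont : continuous_on J W FRS TRS rs_inv.
Proof.
apply: (continuous_on_from_img is_topology_fibprod rs_map_inj).
by apply: eq_continuous_on (continuous_on_id is_topology_fibprod) => q Fq /=; rewrite rs_invK.
Qed.

Lemma rs_map_cont : continuous_on FRS TRS J W rs_map.
Proof.
exact: (continuous_on_into_img is_topology_fibprod rs_map_inj
  (continuous_on_id is_topology_fibprod)).
Qed.

Lemma fibprod_fst_cont : continuous_on FRS TRS R OR fst.
Proof. by apply: continuous_on_fst tS _ => q []. Qed.

Lemma fibprod_snd_cont : continuous_on FRS TRS S OS snd.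
Proof. by apply: continuous_on_snd tR _ => q []. Qed.

Lemma rs_inv_fst_cont : continuous_on J W R OR (fun j => (rs_inv j).1).
Proof. exact: (continuous_on_comp rs_inv_cont fibprod_fst_cont). Qed.

Lemma rs_inv_snd_cont : continuous_on J W S OS (fun j => (rs_inv j).2).
Proof. exact: (continuous_on_comp rs_inv_cont fibprod_snd_cont). Qed.

Local Notation C := (fibprod J J).
Local Notation TC := (fibprod_top J W J W).

(* Writing [rs_inv q.1 = ((x,u),(u,y))] and [rs_inv q.2 = ((y,v),(v,z))],
   the middle pair [((u,y),(y,v))] lies in S x_X R; [g] rewrites it as
   [((u,w),(w,v))] in R x_X S, and [rs_inv] of the product [(x,z)] is
   [((x,w),(w,z))]. *)
Definition middle (q : (X * X) * (X * X)) : (X * X) * (X * X) :=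
  g ((rs_inv q.1).2, (rs_inv q.2).1).

Lemma J_mul_cont : continuous_on C TC J W rs_map.
Proof.
have tC : is_topology C TC.
  by apply: is_topology_subspace (is_topology_prod is_topology_J is_topology_J) _ => q [].
have inv1 q : C q -> [/\ FRS (rs_inv q.1), (rs_inv q.1).1.1 = q.1.1 & (rs_inv q.1).2.2 = q.1.2].
  by case=> /rs_invP.
have inv2 q : C q -> [/\ FRS (rs_inv q.2), (rs_inv q.2).1.1 = q.2.1 & (rs_inv q.2).2.2 = q.2.2].
  by case=> _ /rs_invP.
have c1 : continuous_on C TC J W fst by apply: continuous_on_fst is_topology_J _ => q [].
have c2 : continuous_on C TC J W snd by apply: continuous_on_snd is_topology_J _ => q [].
have a1 := continuous_on_comp c1 rs_inv_fst_cont.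
have a2 := continuous_on_comp c1 rs_inv_snd_cont.
have b1 := continuous_on_comp c2 rs_inv_fst_cont.
have b2 := continuous_on_comp c2 rs_inv_snd_cont.
have FSR_mid q : C q -> FSR ((rs_inv q.1).2, (rs_inv q.2).1).
  move=> Cq; have [[_ S1 _] _ e1] := inv1 q Cq; have [[R2 _ _] e2 _] := inv2 q Cq.
  by split=> //=; rewrite e1 e2; case: Cq.
have cmid : continuous_on C TC FRS TRS middle :=
  continuous_on_comp (continuous_on_pair tC a2 b1 FSR_mid) g_cont.
have m1 := continuous_on_comp cmid fibprod_fst_cont.
have m2 := continuous_on_comp cmid fibprod_snd_cont.
have e1 q : C q -> ((fun q => (rs_inv q.1).1) q).2 = ((fun q => (middle q).1) q).1.
  move=> Cq; rewrite /= /middle; have := g_rng (FSR_mid q Cq); rewrite /rng2 => ->.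
  by have [[]] := inv1 q Cq.
have e2 q : C q -> ((fun q => (middle q).2) q).2 = ((fun q => (rs_inv q.2).2) q).1.
  move=> Cq; rewrite /= /middle; have := g_src (FSR_mid q Cq); rewrite /src2 => ->.
  by have [[]] := inv2 q Cq.
have cR := etale_mul_cont_comp eR tC a1 m1 e1.
have cS := etale_mul_cont_comp eS tC m2 b2 e2.
have prodF q : C q -> FRS (((rs_inv q.1).1.1, (middle q).1.2), ((middle q).2.1, (rs_inv q.2).2.2)).
  move=> Cq; split=> /=.
  + exact: continuous_on_mapsto cR _ Cq.
  + exact: continuous_on_mapsto cS _ Cq.
  + by case: (g_fibprod (FSR_mid q Cq)).
apply: eq_continuous_on (continuous_on_into_img is_topology_fibprod rs_map_inj
  (continuous_on_pair tC cR cS prodF)) => q Cq.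
by rewrite /= /rs_map /=; have [_ -> _] := inv1 q Cq; have [_ _ ->] := inv2 q Cq.
Qed.

Lemma J_swap_cont : continuous_on J W J W swap.
Proof.
have s1 := continuous_on_comp rs_inv_fst_cont (etale_swap_cont eR).
have s2 := continuous_on_comp rs_inv_snd_cont (etale_swap_cont eS).
have FSR_swap j : J j -> FSR (swap (rs_inv j).2, swap (rs_inv j).1).
  move=> Jj; have [[Ra Sb e] _ _] := rs_invP Jj.
  by split=> /=; [exact: (etale_swap eS)|exact: (etale_swap eR)|rewrite e].
have cg := continuous_on_comp (continuous_on_pair is_topology_J s2 s1 FSR_swap) g_cont.
apply: eq_continuous_on (continuous_on_into_img is_topology_fibprod rs_map_inj cg) => j Jj.
have [_ e1 e2] := rs_invP Jj.
rewrite /= /rs_map; have := g_rng (FSR_swap j Jj); have := g_src (FSR_swap j Jj).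
by rewrite /rng2 /src2 /= => -> ->; rewrite e1 e2.
Qed.

Lemma J_swap_homeo : homeo_on J W J W (fun p => (p.2, p.1)).
Proof.
split; first exact: J_swap_cont.
by exists swap; split=> //; [exact: J_swap_cont|move=> []|move=> []].
Qed.

Lemma J_fst_cont : continuous_on J W setT open_X fst.
Proof.
apply: (continuous_on_from_img is_topology_fibprod rs_map_inj).
exact: (continuous_on_comp fibprod_fst_cont (etale_fst_cont eR)).
Qed.

(* The image of a basic open set [(U1 x U2) `&` FRS] under q |-> q.1.1 is the
   image under [fst] of the R-open set of those p in U1 with p.2 in fst @` U2. *)
Lemma fibprod_rng_open U : TRS U -> open ((fun q => q.1.1) @` U).
Proof.
move=> [W0 OW0 eU].
have -> : (fun q => q.1.1) @` U =
    \bigcup_(V in [set V : set X | open V /\ V `<=` (fun q => q.1.1) @` U]) V.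
  apply/seteqP; split=> [_ [q Uq <-]|y [V [_ VU] Vy]]; last exact: VU.
  have [W0q Fq] : (W0 `&` FRS) q by rewrite -eU.
  have [U1 [U2 [OU1 OU2 U1q U2q sW]]] := OW0 q W0q.
  pose N := U1 `&` (R `&` snd @^-1` (fst @` U2)).
  have ON : OR N := openI_on tR OU1
    (continuous_on_preimage (etale_snd_cont eR) (etale_fst_open eS OU2)).
  exists (fst @` N); first split.
  - exact: (etale_fst_open eR ON).
  - move=> _ [a [U1a [Ra [b U2b eb]]] <-].
    have Fab : FRS (a, b) by split=> //=; exact: open_sub tS OU2 _ U2b.
    by exists (a, b) => //; rewrite eU; split=> //; apply: sW.
  - exists q.1 => //; split=> //; split; first by case: Fq.
    by exists q.2 => //; case: Fq.
by apply: bigcup_open => V [].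
Qed.

Lemma J_fst_open V : W V -> open (fst @` V).
Proof.
move=> [U OU ->]; suff -> : fst @` (rs_map @` U) = (fun q => q.1.1) @` U.
  exact: fibprod_rng_open.
apply/seteqP; split=> [_ [_ [q Uq <-] <-]|_ [q Uq <-]].
  by exists q.
by exists (rs_map q) => //; exists q.
Qed.

Lemma J_fst_locinj j : J j ->
  exists2 V, W V & V j /\ (forall x y, V x -> V y -> x.1 = y.1 -> x = y).
Proof.
move=> Jj; have [[Rq Sq _] e1 e2] := rs_invP Jj.
have [B1 OB1 [B1q _ B1i]] := etale_bisection eR (open_full tR) Rq.
have [B2 OB2 [B2q _ B2i]] := etale_bisection eS (open_full tS) Sq.
exists (rs_map @` (box B1 B2 `&` FRS)).
  by exists (box B1 B2 `&` FRS) => //; exists (box B1 B2) => //; exact: prod_top_box.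
split.
  exists (rs_inv j); first by split=> //; case: (rs_invP Jj).
  by rewrite /rs_map e1 e2 -surjective_pairing.
move=> _ _ [p1 [[B1p1 B2p1] Fp1] <-] [p2 [[B1p2 B2p2] Fp2] <-] /= e.
have e1' : p1.1 = p2.1 by apply: B1i.
have e2' : p1.2 = p2.2.
  by apply: B2i => //; case: Fp1 => _ _ <-; case: Fp2 => _ _ <-; rewrite e1'.
by rewrite (surjective_pairing p1) (surjective_pairing p2) e1' e2'.
Qed.

Lemma J_etale : compact [set: X] -> zero_dim X -> etale_eq_rel J W.
Proof.
move=> cX zX; split.
- by split; [exact: J_equivalence|exact: J_countable].
- split; first exact: is_topology_J.
  split.
  + apply: hausdorff_on_img is_topology_fibprod rs_map_inj _.
    by apply: hausdorff_on_prod tR tS (etale_hausdorff eR) (etale_hausdorff eS) => q [].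
  + exact: locally_compact_on_open_locinj is_topology_J J_fst_cont J_fst_open J_fst_locinj cX zX.
  + exact: second_countable_on_img
      (second_countable_on_prod _ (etale_second_countable eR) (etale_second_countable eS)).
- exact: J_mul_cont.
- exact: J_swap_homeo.
- exact: local_homeo_on_open_locinj is_topology_J J_fst_cont J_fst_open J_fst_locinj.
Qed.

Lemma fibprod_R_unit q : FRS q -> R (rs_map q) -> q = (rs_map q, (q.2.2, q.2.2)).
Proof.
case: q => [[a b] [c d]] [/= Rab Scd ebc] Rad; rewrite /rs_map /=.
rewrite -ebc in Scd.
suff ebd : b = d by rewrite -ebc -ebd.
exact: diag_of_RS (etale_trans eR (etale_sym eR Rab) Rad) Scd.
Qed.

Lemma fibprod_S_unit q : FRS q -> S (rs_map q) -> q = ((q.1.1, q.1.1), rs_map q).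
Proof.
case: q => [[a b] [c d]] [/= Rab Scd ebc] Sad; rewrite /rs_map /=.
rewrite -ebc in Scd.
suff eab : a = b by rewrite -ebc -eab.
exact: diag_of_RS Rab (etale_trans eS Sad (etale_sym eS Scd)).
Qed.

Lemma rs_map_box_R U : U `<=` R -> rs_map @` (box U D `&` FRS) = U.
Proof.
move=> UR; apply/seteqP; split=> [_ [q [[U1 D2] Fq] <-]|[x z] Uxz].
  by rewrite /rs_map -D2; case: Fq => _ _ <-; rewrite -surjective_pairing.
exists ((x, z), (z, z)) => //; split; first by split.
by split=> //=; [exact: UR|exact: (etale_refl eS)].
Qed.

Lemma rs_map_box_S U : U `<=` S -> rs_map @` (box D U `&` FRS) = U.
Proof.
move=> US; apply/seteqP; split=> [_ [q [[D1 U2] Fq] <-]|[x z] Uxz].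
  by rewrite /rs_map D1; case: Fq => _ _ ->; rewrite -surjective_pairing.
exists ((x, x), (x, z)) => //; split; first by split.
by split=> //=; [exact: (etale_refl eR)|exact: US].
Qed.

Lemma J_open_R : W R.
Proof.
exists (box R D `&` FRS); last by rewrite rs_map_box_R.
by exists (box R D) => //; exact: prod_top_box (open_full tR) (etale_diagonal_open eS).
Qed.

Lemma J_open_S : W S.
Proof.
exists (box D S `&` FRS); last by rewrite rs_map_box_S.
by exists (box D S) => //; exact: prod_top_box (etale_diagonal_open eR) (open_full tS).
Qed.

Lemma subspace_J_R : subspace_top W R = OR.
Proof.
have unit_cont : continuous_on R OR FRS TRS (fun p => (p, (p.2, p.2))).
  have u := continuous_on_comp (etale_snd_cont eR) (etale_unit_cont eS).
  apply: continuous_on_pair tR (continuous_on_id tR) u _ => p Rp.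
  by split=> //; exact: (etale_refl eS).
apply/seteqP; split=> U.
- move=> [V [U0 OU0 ->] ->].
  have -> : rs_map @` U0 `&` R = R `&` (fun p => (p, (p.2, p.2))) @^-1` U0.
    apply/seteqP; split=> [_ [[q U0q <-] Rq]|[x z] [Rxz U0i]].
      split=> //; rewrite /preimage /=.
      by rewrite -(fibprod_R_unit (open_sub is_topology_fibprod OU0 U0q) Rq).
    by split=> //; exists ((x, z), (z, z)).
  exact: continuous_on_preimage unit_cont OU0.
- move=> OU; exists (rs_map @` (box U D `&` FRS)).
    exists (box U D `&` FRS) => //; exists (box U D) => //.
    exact: prod_top_box OU (etale_diagonal_open eS).
  by rewrite rs_map_box_R ?setIidl //; exact: open_sub tR OU.
Qed.

Lemma subspace_J_S : subspace_top W S = OS.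
Proof.
have unit_cont : continuous_on S OS FRS TRS (fun p => ((p.1, p.1), p)).
  have u := continuous_on_comp (etale_fst_cont eS) (etale_unit_cont eR).
  apply: continuous_on_pair tS u (continuous_on_id tS) _ => p Sp.
  by split=> //; exact: (etale_refl eR).
apply/seteqP; split=> U.
- move=> [V [U0 OU0 ->] ->].
  have -> : rs_map @` U0 `&` S = S `&` (fun p => ((p.1, p.1), p)) @^-1` U0.
    apply/seteqP; split=> [_ [[q U0q <-] Sq]|[x z] [Sxz U0i]].
      split=> //; rewrite /preimage /=.
      by rewrite -(fibprod_S_unit (open_sub is_topology_fibprod OU0 U0q) Sq).
    by split=> //; exists ((x, x), (x, z)).
  exact: continuous_on_preimage unit_cont OU0.
- move=> OU; exists (rs_map @` (box D U `&` FRS)).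
    exists (box D U `&` FRS) => //; exists (box D U) => //.
    exact: prod_top_box (etale_diagonal_open eR) OU.
  by rewrite rs_map_box_S ?setIidl //; exact: open_sub tS OU.
Qed.

Section Uniqueness.
Variable O : set (set (X * X)).
Hypotheses (eO : etale_eq_rel J O)
  (O_R : subspace_top O R = OR) (O_S : subspace_top O S = OS).

(* The O-product restricted to R x_X S is continuous for OR x OS, since these
   are the topologies O induces on R and S. *)
Lemma open_join_sub : O `<=` W.
Proof.
move=> V OV; apply/(img_topE is_topology_fibprod rs_map_inj).
split; first exact: open_sub (etale_topology eO) OV.
have [Wp OWp eM] := continuous_on_preimage (etale_mul_cont eO) OV.
have FRS_C q : FRS q -> fibprod J J q.
  by case=> ? ? ?; split=> //; [exact: R_sub_J|exact: S_sub_J].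
exists (Wp `&` box R S).
- move=> p [Wpp [Rp Sp]]; have [U [V' [OU OV' Up Vp sW]]] := OWp p Wpp.
  exists (U `&` R), (V' `&` S); split.
  + by rewrite -O_R; exists U.
  + by rewrite -O_S; exists V'.
  + by split.
  + by split.
  + by move=> r [[? ?] [? ?]]; split; [apply: sW|split].
- apply/seteqP; split=> q.
  + move=> [Fq Vq]; have : (fibprod J J `&` rs_map @^-1` V) q by split=> //; exact: FRS_C.
    by rewrite eM => -[Wpq _]; split=> //; split=> //; case: Fq.
  + move=> [[Wpq [Rq Sq]] Fq]; split=> //.
    have : (Wp `&` fibprod J J) q by split=> //; exact: FRS_C.
    by rewrite -eM => -[].
Qed.

(* Around j, cut an O-bisection B down to the points of B whose range lies in
   the open set fst @` (V `&` B); this stays inside V by injectivity of fst on B. *)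
Lemma join_open_sub : W `<=` O.
Proof.
have tO := etale_topology eO.
move=> V WV; apply: (open_locally tO) => j Vj.
have Jj : J j := open_sub is_topology_J WV Vj.
have [B OB [Bj _ Binj]] := etale_bisection eO (open_full tO) Jj.
have oI : open (fst @` (V `&` B)).
  exact/J_fst_open/(openI_on is_topology_J WV (open_join_sub OB)).
exists (B `&` (J `&` fst @^-1` (fst @` (V `&` B)))).
  exact: openI_on tO OB (continuous_on_preimage (etale_fst_cont eO) oI).
split; first by split=> //; split=> //; exists j.
move=> b [Bb [Jb [c [Vc Bc] ec]]].
by rewrite (Binj b c Bb Bc (esym ec)).
Qed.

Lemma join_top_unique : O = W.
Proof. by apply/seteqP; split; [exact: open_join_sub|exact: join_open_sub]. Qed.

End Uniqueness.

Lemma fibprod_closed : hausdorff_space X -> prod_top OR OS (box R S `\` FRS).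
Proof.
move=> hX p [[Rp Sp] nF].
have ne : p.1.2 != p.2.1 by apply/eqP => e; apply: nF; split.
move: hX; rewrite open_hausdorff => /(_ _ _ ne) [[U V] /= [Ux Vy] [oU oV /eqP UV]].
rewrite !in_setE in Ux Vy.
exists (R `&` snd @^-1` U), (S `&` fst @^-1` V); split.
- exact: continuous_on_preimage (etale_snd_cont eR) oU.
- exact: continuous_on_preimage (etale_fst_cont eS) oV.
- by split.
- by split.
- move=> q [[Rq Uq] [Sq Vq]]; split; first by split.
  move=> [_ _ e]; have : (U `&` V) q.1.2 by split=> //; rewrite e.
  by rewrite UV.
Qed.

Lemma J_compact : hausdorff_space X -> compact_in R OR R -> compact_in S OS S ->
  compact_in J W J.
Proof.
move=> hX cR cS; apply: compact_in_image rs_map_cont _.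
have FRS_box : FRS `<=` box R S by move=> q [].
exact: (compact_in_closed_prod tR cR cS FRS_box (fibprod_closed hX)).
Qed.

End Join.

Theorem proposition3p3 (X : topologicalType)
    (R : set (X * X)) (OR : set (set (X * X)))
    (S : set (X * X)) (OS : set (set (X * X))) :
  compact [set: X] -> hausdorff_space X -> metrizable X -> zero_dim X ->
  etale_eq_rel R OR -> etale_eq_rel S OS -> transverse R OR S OS ->
  [/\ etale_eq_rel (join_rel R S) (join_top R OR S OS),
      (CEER R OR -> CEER S OS -> CEER (join_rel R S) (join_top R OR S OS)),
      subspace_top (join_top R OR S OS) R = OR /\
      subspace_top (join_top R OR S OS) S = OS,
      (forall O : set (set (X * X)),
          etale_eq_rel (join_rel R S) O ->
          subspace_top O R = OR -> subspace_top O S = OS ->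
          O = join_top R OR S OS) &
      join_top R OR S OS R /\ join_top R OR S OS S].
Proof.
move=> cX hX _ zX eR eS [RS_diag [h [[_ [g [g_cont _ hg]]] h_rng h_src]]].
have g_rng q : fibprod S R q -> rng2 (g q) = rng2 q.
  by move=> Fq; rewrite -h_rng ?hg //; exact: (continuous_on_mapsto g_cont Fq).
have g_src q : fibprod S R q -> src2 (g q) = src2 q.
  by move=> Fq; rewrite -h_src ?hg //; exact: (continuous_on_mapsto g_cont Fq).
have eJ := J_etale eR eS RS_diag g_cont g_rng g_src cX zX.
rewrite (join_relE eR eS g_cont g_rng g_src); split=> //.
- by move=> [_ cR] [_ cS]; split=> //; exact: J_compact eR eS RS_diag hX cR cS.
- by split; [exact: subspace_J_R eR eS RS_diag|exact: subspace_J_S eR eS RS_diag].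
- by move=> O eO; exact: join_top_unique eR eS RS_diag O eO.
- by split; [exact: J_open_R eR eS|exact: J_open_S eR eS].
Qed.
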